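(* Let $\Gamma:[0,1]\to\mathcal{D}$ be a continuous path. For any $s\in[0,1]$ and any finitely generated subgroup $H\le\Gamma_s$, the restriction $J_{s,t}|_H$ is an injective homomorphism into $\mathrm{PSL}_2\mathbb{C}$ for all $t\in[0,1]$ sufficiently close to $s$.
   Context: $\mathcal{D}$: discrete torsion-free subgroups of $\mathrm{PSL}_2\mathbb{C}$ with the Chabauty topology ($\Gamma_n\to\Gamma$ iff accumulation points of sequences $\psi_n\in\Gamma_n$ lie in $\Gamma$ and each element of $\Gamma$ is a limit of some $\psi_n\in\Gamma_n$). For a path $\Gamma$ with $\Gamma_t=\Gamma(t)$, $s\in[0,1]$, $\psi\in\Gamma_s$: a $\Gamma$-path through $\psi$ based at $s$ is a continuous $j:I\to\mathrm{PSL}_2\mathbb{C}$, $I\subseteq[0,1]$ an interval containing $s$, with $j(t)\in\Gamma_t$ for $t\in I$ and $j(s)=\psi$. Any two such paths agree on the intersection of their domains, so there is a maximal such interval $I^s_\psi$, carrying the path $j^s_\psi$. With $\overline{\mathrm{PSL}_2\mathbb{C}}=\mathrm{PSL}_2\mathbb{C}\cup\{\infty\}$, define $J_{s,t}:\Gamma_s\to\overline{\mathrm{PSL}_2\mathbb{C}}$ by $J_{s,t}(\psi)=j^s_\psi(t)$ if $t\in I^s_\psi$ and $\infty$ otherwise. *)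

From HB Require Import structures.
From mathcomp Require Import all_boot all_order all_algebra.
From mathcomp Require Import complex reals.
From Stdlib Require Import ClassicalEpsilon.
Set Implicit Arguments. Unset Strict Implicit. Unset Printing Implicit Defensive.
Import Order.TTheory GRing.Theory Num.Theory.
Local Open Scope ring_scope.

Section PSL2.
Variable R : realType.

Definition Mat := 'M[R[i]]_2.

Definition cabs (z : R[i]) : R := Normc.normc z.

Definition mnorm (A : Mat) : R := \sum_(i < 2) \sum_(j < 2) cabs (A i j).

(* "positive" half of C \ {0}: a section of z |-> -z *)
Definition pos_c (z : R[i]) : bool :=
  (0 < complex.Re z) || ((complex.Re z == 0) && (0 < complex.Im z)).

Definition lead_entry (A : Mat) : R[i] :=
  if A 0 0 != 0 then A 0 0 else if A 0 1 != 0 then A 0 1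
  else if A 1 0 != 0 then A 1 0 else A 1 1.

Definition normalized (A : Mat) : bool := pos_c (lead_entry A).

(* canonical representative of the class {A, -A} *)
Definition normalize (A : Mat) : Mat := if normalized A then A else - A.

Lemma lead_entryN (A : Mat) : lead_entry (- A) = - lead_entry A.
Proof.
rewrite /lead_entry !mxE !oppr_eq0.
by case: (A 0 0 != 0); case: (A 0 1 != 0); case: (A 1 0 != 0).
Qed.

Lemma lead_entry_eq0 (A : Mat) : lead_entry A = 0 -> A = 0.
Proof.
rewrite /lead_entry.
case: ifP => [/negP + H|/negbFE/eqP a0]; first by rewrite H eqxx.
case: ifP => [/negP + H|/negbFE/eqP b0]; first by rewrite H eqxx.
case: ifP => [/negP + H|/negbFE/eqP c0 d0]; first by rewrite H eqxx.
have E : forall k : 'I_2, k = 0 \/ k = 1.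
  by case=> [[|[|//]] ?]; [left|right]; apply/val_inj.
apply/matrixP => i j; rewrite mxE.
by case: (E i) => ->; case: (E j) => ->.
Qed.

Lemma pos_cN (z : R[i]) : z != 0 -> ~~ pos_c z -> pos_c (- z).
Proof.
case: z => a b; rewrite /pos_c /= => nz.
rewrite negb_or negb_and -!leNgt => /andP[ha hb].
rewrite oppr_gt0 oppr_eq0.
have [a0|a0] := eqVneq a 0; last by rewrite lt_neqAle a0 ha.
rewrite a0 eqxx ltxx /= in hb *.
rewrite oppr_gt0 lt_neqAle hb andbT; apply/eqP => b0.
by move: nz; rewrite a0 b0 eqxx.
Qed.

Lemma normalized_normalize (A : Mat) : A != 0 -> normalized (normalize A).
Proof.
move=> nzA; rewrite /normalize; case: ifP => // /negbT h.
rewrite /normalized lead_entryN; apply: pos_cN => //.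
by apply/eqP => /lead_entry_eq0 /eqP; rewrite (negbTE nzA).
Qed.

Lemma det_normalize (A : Mat) : \det (normalize A) = \det A.
Proof.
rewrite /normalize; case: ifP => // _.
by rewrite -scaleN1r detZ expr2 mulrNN !mul1r.
Qed.

Lemma det1_neq0 (A : Mat) : \det A = 1 -> A != 0.
Proof. by move=> h; apply/eqP => A0; move: h; rewrite A0 det0 => /eqP; rewrite eq_sym oner_eq0. Qed.

Definition is_psl (A : Mat) : bool := (\det A == 1) && normalized A.

(* PSL_2(C) = SL_2(C)/{+-I}, each class represented by its normalized member *)
Record PSL2 := MkPSL2 { pmat : Mat; pmatP : is_psl pmat }.

Lemma is_psl_normalize (A : Mat) : \det A = 1 -> is_psl (normalize A).
Proof.
move=> h; rewrite /is_psl det_normalize h eqxx /=.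
by apply: normalized_normalize; apply: det1_neq0.
Qed.

Lemma det_mul1 (p q : PSL2) : \det (pmat p *m pmat q) = 1.
Proof.
case: p q => [A /andP[/eqP hA _]] [B /andP[/eqP hB _]] /=.
by rewrite det_mulmx hA hB mulr1.
Qed.

Definition pmul (p q : PSL2) : PSL2 :=
  MkPSL2 (is_psl_normalize (det_mul1 p q)).

Lemma det_inv1 (p : PSL2) : \det (invmx (pmat p)) = 1.
Proof.
case: p => [A /andP[/eqP hA _]] /=.
by rewrite det_inv hA invr1.
Qed.

Definition pinv (p : PSL2) : PSL2 := MkPSL2 (is_psl_normalize (det_inv1 p)).

Lemma det_one : \det (1%:M : Mat) = 1.
Proof. by rewrite det1. Qed.

Definition pone : PSL2 := MkPSL2 (is_psl_normalize det_one).

Definition ppow (p : PSL2) (n : nat) : PSL2 := iter n (pmul p) pone.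

Definition pdist (p q : PSL2) : R :=
  Num.min (mnorm (pmat p - pmat q)) (mnorm (pmat p + pmat q)).

Definition psubgroup (G : PSL2 -> Prop) : Prop :=
  G pone /\ (forall g h, G g -> G h -> G (pmul g h)) /\ (forall g, G g -> G (pinv g)).

Definition pdiscrete (G : PSL2 -> Prop) : Prop :=
  forall g, G g -> exists2 e : R, 0 < e & forall h, G h -> pdist h g < e -> h = g.

Definition ptorsion_free (G : PSL2 -> Prop) : Prop :=
  forall g n, G g -> (0 < n)%N -> ppow g n = pone -> g = pone.

Definition inD (G : PSL2 -> Prop) : Prop :=
  psubgroup G /\ pdiscrete G /\ ptorsion_free G.

Definition generated (S : PSL2 -> Prop) (g : PSL2) : Prop :=
  forall K, psubgroup K -> (forall x, S x -> K x) -> K g.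

Definition fin_gen_subgroup (H : PSL2 -> Prop) : Prop :=
  psubgroup H /\ exists l : list PSL2, forall g, H g <-> generated (fun x => List.In x l) g.

Definition pconv (psi : nat -> PSL2) (g : PSL2) : Prop :=
  forall e : R, 0 < e -> exists N, forall n, (N <= n)%N -> pdist (psi n) g < e.

Definition paccum (psi : nat -> PSL2) (g : PSL2) : Prop :=
  forall e : R, 0 < e -> forall N, exists2 n, (N <= n)%N & pdist (psi n) g < e.

Definition chabauty_conv (Gs : nat -> PSL2 -> Prop) (G : PSL2 -> Prop) : Prop :=
  (forall (psi : nat -> PSL2) g, (forall n, Gs n (psi n)) -> paccum psi g -> G g) /\
  (forall g, G g -> exists psi : nat -> PSL2, (forall n, Gs n (psi n)) /\ pconv psi g).

Definition rconv (u : nat -> R) (t : R) : Prop :=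
  forall e : R, 0 < e -> exists N, forall n, (N <= n)%N -> `|u n - t| < e.

Definition unit_int (t : R) : Prop := 0 <= t <= 1.

(* a continuous path Gamma : [0,1] -> D (values outside [0,1] are irrelevant) *)
Definition cont_path_D (Gam : R -> PSL2 -> Prop) : Prop :=
  (forall t, unit_int t -> inD (Gam t)) /\
  (forall (u : nat -> R) t, (forall n, unit_int (u n)) -> unit_int t -> rconv u t ->
     chabauty_conv (fun n => Gam (u n)) (Gam t)).

Definition is_interval (I : R -> Prop) : Prop :=
  forall a b x, I a -> I b -> a <= x <= b -> I x.

Definition Gam_path (Gam : R -> PSL2 -> Prop) (s : R) (psi : PSL2)
    (I : R -> Prop) (j : R -> PSL2) : Prop :=
  is_interval I /\ (forall t, I t -> unit_int t) /\ I s /\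
  (forall t, I t -> forall e : R, 0 < e -> exists2 d : R, 0 < d &
      forall t', I t' -> `|t' - t| < d -> pdist (j t') (j t) < e) /\
  (forall t, I t -> Gam t (j t)) /\ j s = psi.

Definition J_rel (Gam : R -> PSL2 -> Prop) (s t : R) (psi phi : PSL2) : Prop :=
  exists I j, Gam_path Gam s psi I j /\ I t /\ j t = phi.

(* J_{s,t}(psi); None stands for the point infinity *)
Definition J (Gam : R -> PSL2 -> Prop) (s t : R) (psi : PSL2) : option PSL2 :=
  epsilon (inhabits None) (fun o => match o with
    | Some phi => J_rel Gam s t psi phi
    | None => ~ exists phi, J_rel Gam s t psi phi end).

End PSL2.

From Pilot Require Import Defs.
From HB Require Import structures.
From mathcomp Require Import all_boot all_order all_algebra.
From mathcomp Require Import complex reals.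
From mathcomp Require Import boolp classical_sets topology normedtype sequences.
From mathcomp Require Import ring lra.
From Stdlib Require Import Classical ClassicalEpsilon List.
Import Order.TTheory GRing.Theory Num.Theory.
Import numFieldNormedType.Exports.
Local Open Scope ring_scope.
Set Implicit Arguments. Unset Strict Implicit. Unset Printing Implicit Defensive.

(* A nontrivial element of PSL_2(C) near 1 has a power whose distance to 1 lies in a thin
   annulus of fixed small radius (escape lemma, by the eigenvalue trichotomy).  So if groups
   Gam t, t -> s, had nontrivial elements tending to 1, Chabauty convergence would produce a
   nontrivial element of Gam s arbitrarily near 1, contradicting discreteness: near s the
   groups Gam t are uniformly discrete.  This makes Gam-paths unique (two paths agree on an
   open and closed subset of their common interval) and lets every g in Gam s be continued
   on a neighbourhood of s by choosing in Gam t the unique element near g.  Products and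
   inverses of Gam-paths are Gam-paths, so the generators of H, hence all of H, continue on
   a common neighbourhood, on which J_{s,t} is therefore a homomorphism; it is injective
   because two paths meeting at time t agree at time s. *)

Section ComplexModulus.
Variable R : realType.
Implicit Types z w : R[i].

Lemma cabs_ge0 z : 0 <= cabs z.
Proof. by case: z => a b; rewrite /cabs /= sqrtr_ge0. Qed.

Lemma cabs0 : cabs (0 : R[i]) = 0.
Proof. exact: Normc.normc0. Qed.

Lemma cabs1 : cabs (1 : R[i]) = 1.
Proof. exact: Normc.normc1. Qed.

Lemma cabsD z w : cabs (z + w) <= cabs z + cabs w.
Proof. exact: le_normcD. Qed.

Lemma cabsN z : cabs (- z) = cabs z.
Proof. exact: normcN. Qed.

Lemma cabsM z w : cabs (z * w) = cabs z * cabs w.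
Proof. exact: Normc.normcM. Qed.

Lemma cabsV z : cabs z^-1 = (cabs z)^-1.
Proof. exact: Normc.normcV. Qed.

Lemma cabs_eq0 z : cabs z = 0 -> z = 0.
Proof. exact: Normc.eq0_normc. Qed.

Lemma cabs_gt0 z : z != 0 -> 0 < cabs z.
Proof.
move=> nz; rewrite lt_neqAle cabs_ge0 andbT eq_sym.
by apply: contra nz => /eqP/cabs_eq0/eqP.
Qed.

Lemma cabsB z w : cabs (z - w) <= cabs z + cabs w.
Proof. by rewrite -(cabsN w) cabsD. Qed.

Lemma cabsX z n : cabs (z ^+ n) = cabs z ^+ n.
Proof. by elim: n => [|n IH]; rewrite ?expr0 ?cabs1 // !exprS cabsM IH. Qed.

Lemma cabs_Re z : `|complex.Re z| <= cabs z.
Proof.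
case: z => a b; rewrite /cabs /= -sqrtr_sqr ler_wsqrtr //.
by rewrite lerDl sqr_ge0.
Qed.

Lemma cabs_Im z : `|complex.Im z| <= cabs z.
Proof.
case: z => a b; rewrite /cabs /= -sqrtr_sqr ler_wsqrtr //.
by rewrite lerDr sqr_ge0.
Qed.

Lemma cabs_le_ReIm z : cabs z <= `|complex.Re z| + `|complex.Im z|.
Proof.
case: z => a b; rewrite /cabs /=.
rewrite -(@ger0_norm _ (`|a| + `|b|)) ?addr_ge0 //.
rewrite -sqrtr_sqr ler_wsqrtr // sqrrD !real_normK ?num_real //.
rewrite -addrA [_ *+ 2 + _]addrC addrA lerDl mulrn_wge0 // mulr_ge0 //.
Qed.

Lemma cabs_sqr z : cabs z ^+ 2 = complex.Re z ^+ 2 + complex.Im z ^+ 2.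
Proof. by case: z => a b; rewrite /cabs /= sqr_sqrtr // addr_ge0 // sqr_ge0. Qed.

Lemma ReD z w : complex.Re (z + w) = complex.Re z + complex.Re w.
Proof. by case: z; case: w. Qed.

Lemma ImD z w : complex.Im (z + w) = complex.Im z + complex.Im w.
Proof. by case: z; case: w. Qed.

Lemma ReN z : complex.Re (- z) = - complex.Re z.
Proof. by case: z. Qed.

Lemma ImN z : complex.Im (- z) = - complex.Im z.
Proof. by case: z. Qed.

Lemma ReM z w : complex.Re (z * w) = complex.Re z * complex.Re w - complex.Im z * complex.Im w.
Proof. by case: z; case: w. Qed.

Lemma Re_natr n : complex.Re (n%:R : R[i]) = n%:R.
Proof. by elim: n => // n IH; rewrite -!natr1 ReD IH. Qed.

Lemma Im_natr n : complex.Im (n%:R : R[i]) = 0.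
Proof. by elim: n => // n IH; rewrite -!natr1 ImD IH add0r. Qed.

Lemma cabs_natr n : cabs (n%:R : R[i]) = n%:R.
Proof.
apply/eqP; rewrite eq_le; apply/andP; split.
  by apply: le_trans (cabs_le_ReIm _) _; rewrite Re_natr Im_natr normr0 addr0 ger0_norm.
by have := cabs_Re (n%:R : R[i]); rewrite Re_natr ger0_norm.
Qed.

End ComplexModulus.

Section Matrix2.
Variable R : realType.
Notation Mat := (Mat R).
Implicit Types A B X Y : Mat.

Lemma ord2P (i : 'I_2) : i = 0 \/ i = 1.
Proof. by case: i => [[|[|//]] ?]; [left|right]; apply/val_inj. Qed.

Lemma sum_ord2 (T : nmodType) (F : 'I_2 -> T) : \sum_(i < 2) F i = F 0 + F 1.
Proof. by rewrite big_ord_recl big_ord1; congr (_ + F _); apply/val_inj. Qed.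

Lemma addmxE A B i j : (A + B) i j = A i j + B i j.
Proof. by rewrite mxE. Qed.

Lemma oppmxE A i j : (- A) i j = - A i j.
Proof. by rewrite mxE. Qed.

Lemma mx2P A B : A 0 0 = B 0 0 -> A 0 1 = B 0 1 -> A 1 0 = B 1 0 -> A 1 1 = B 1 1 -> A = B.
Proof.
move=> h00 h01 h10 h11; apply/matrixP => i j.
by case: (ord2P i) => ->; case: (ord2P j) => ->.
Qed.

Lemma mulmx2E A B i j : (A * B) i j = A i 0 * B 0 j + A i 1 * B 1 j.
Proof. by rewrite -mulmxE mxE sum_ord2. Qed.

Lemma mxtrace2 A : \tr A = A 0 0 + A 1 1.
Proof. by rewrite /mxtrace sum_ord2. Qed.

Lemma det2 A : \det A = A 0 0 * A 1 1 - A 0 1 * A 1 0.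
Proof.
rewrite (expand_det_row A 0) sum_ord2 /cofactor !det_mx11 !mxE.
have l1 : lift (0 : 'I_2) (0 : 'I_1) = 1 by apply/val_inj.
have l2 : lift (1 : 'I_2) (0 : 'I_1) = 0 by apply/val_inj.
rewrite l1 l2 /= expr0 expr1 mul1r mulN1r mulrN.
by congr (_ - _); rewrite mulrC.
Qed.

Lemma adj2E A i j : \adj A i j =
  if i == j then (if i == 0 then A 1 1 else A 0 0) else - A i j.
Proof.
have l1 : lift (0 : 'I_2) (0 : 'I_1) = 1 by apply/val_inj.
have l2 : lift (1 : 'I_2) (0 : 'I_1) = 0 by apply/val_inj.
rewrite mxE /cofactor det_mx11 !mxE.
by case: (ord2P i) => ->; case: (ord2P j) => ->;
  rewrite /= ?l1 ?l2 /= ?expr0 ?expr1 ?mul1r ?mulN1r ?expr2 ?mulrNN ?mul1r.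
Qed.

Lemma mnorm2E A : mnorm A = cabs (A 0 0) + cabs (A 0 1) + (cabs (A 1 0) + cabs (A 1 1)).
Proof. by rewrite /mnorm !sum_ord2. Qed.

Lemma mnorm_ge0 A : 0 <= mnorm A.
Proof. by rewrite mnorm2E !addr_ge0 ?cabs_ge0. Qed.

Lemma mnorm_entry A i j : cabs (A i j) <= mnorm A.
Proof.
rewrite mnorm2E.
have := cabs_ge0 (A 0 0); have := cabs_ge0 (A 0 1).
have := cabs_ge0 (A 1 0); have := cabs_ge0 (A 1 1) => *.
by case: (ord2P i) => ->; case: (ord2P j) => ->; lra.
Qed.

Lemma mnorm_eq0 A : mnorm A = 0 -> A = 0.
Proof.
move=> A0; apply/matrixP => i j; rewrite mxE; apply: cabs_eq0.
by apply/eqP; rewrite eq_le cabs_ge0 andbT -A0 mnorm_entry.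
Qed.

Lemma mnorm0 : mnorm (0 : Mat) = 0.
Proof. by rewrite mnorm2E !mxE cabs0 !addr0. Qed.

Lemma mnorm1 : mnorm (1 : Mat) = 2.
Proof.
have e (i j : 'I_2) : cabs ((1 : Mat) i j) = (i == j)%:R by rewrite mxE -cabs_natr.
rewrite mnorm2E !e /=; lra.
Qed.

Lemma mnormD A B : mnorm (A + B) <= mnorm A + mnorm B.
Proof.
rewrite !mnorm2E !mxE.
have := cabsD (A 0 0) (B 0 0); have := cabsD (A 0 1) (B 0 1).
have := cabsD (A 1 0) (B 1 0); have := cabsD (A 1 1) (B 1 1); lra.
Qed.

Lemma mnormN A : mnorm (- A) = mnorm A.
Proof. by rewrite !mnorm2E !mxE !cabsN. Qed.

Lemma mnormB A B : mnorm (A - B) <= mnorm A + mnorm B.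
Proof. by rewrite -(mnormN B) mnormD. Qed.

Lemma lerB_mnorm A B : mnorm A - mnorm B <= mnorm (A - B).
Proof. by have := mnormD (A - B) B; rewrite subrK; lra. Qed.

Lemma mnorm_tr A : cabs (\tr A) <= mnorm A.
Proof.
rewrite mxtrace2 mnorm2E; have := cabsD (A 0 0) (A 1 1).
have := cabs_ge0 (A 0 1); have := cabs_ge0 (A 1 0); lra.
Qed.

Lemma mnormZ (c : R[i]) A : mnorm (c *: A) = cabs c * mnorm A.
Proof. by rewrite !mnorm2E !mxE !cabsM; ring. Qed.

Lemma mnorm_adj A : mnorm (\adj A) = mnorm A.
Proof. by rewrite !mnorm2E !adj2E /= !cabsN; ring. Qed.

Lemma mnormM A B : mnorm (A * B) <= mnorm A * mnorm B.
Proof.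
rewrite !mnorm2E !mulmx2E.
have e (x y z w : R[i]) : cabs (x * y + z * w) <= cabs x * cabs y + cabs z * cabs w.
  by have := cabsD (x * y) (z * w); rewrite !cabsM.
have := e (A 0 0) (B 0 0) (A 0 1) (B 1 0); have := e (A 0 0) (B 0 1) (A 0 1) (B 1 1).
have := e (A 1 0) (B 0 0) (A 1 1) (B 1 0); have := e (A 1 0) (B 0 1) (A 1 1) (B 1 1).
have := cabs_ge0 (A 0 0); have := cabs_ge0 (A 0 1).
have := cabs_ge0 (A 1 0); have := cabs_ge0 (A 1 1).
have := cabs_ge0 (B 0 0); have := cabs_ge0 (B 0 1).
have := cabs_ge0 (B 1 0); have := cabs_ge0 (B 1 1).
move: (cabs (A 0 0)) (cabs (A 0 1)) (cabs (A 1 0)) (cabs (A 1 1)).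
move: (cabs (B 0 0)) (cabs (B 0 1)) (cabs (B 1 0)) (cabs (B 1 1)) => *.
nra.
Qed.

End Matrix2.

Section SignDistance.
Variable R : realType.
Notation Mat := (Mat R).
Implicit Types A B X Y Z : Mat.

Definition dist_pm X Y : R := Num.min (mnorm (X - Y)) (mnorm (X + Y)).

Lemma dist_pmP X Y : dist_pm X Y = mnorm (X - Y) \/ dist_pm X Y = mnorm (X + Y).
Proof. by rewrite /dist_pm; case: leP => _; tauto. Qed.

Lemma dist_pm_leB X Y : dist_pm X Y <= mnorm (X - Y).
Proof. by rewrite /dist_pm ge_min lexx. Qed.

Lemma dist_pm_leD X Y : dist_pm X Y <= mnorm (X + Y).
Proof. by rewrite /dist_pm ge_min lexx orbT. Qed.

Lemma dist_pm_ge0 X Y : 0 <= dist_pm X Y.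
Proof. by case: (dist_pmP X Y) => ->; apply: mnorm_ge0. Qed.

Lemma dist_pmC X Y : dist_pm X Y = dist_pm Y X.
Proof. by rewrite /dist_pm -mnormN opprB [X + Y]addrC. Qed.

Lemma dist_pmNl X Y : dist_pm (- X) Y = dist_pm X Y.
Proof. by rewrite /dist_pm -opprD mnormN -[- X + Y]opprK opprD opprK mnormN minC. Qed.

Lemma dist_pmNr X Y : dist_pm X (- Y) = dist_pm X Y.
Proof. by rewrite dist_pmC dist_pmNl dist_pmC. Qed.

Lemma dist_pmxx X : dist_pm X X = 0.
Proof.
by apply/eqP; rewrite eq_le dist_pm_ge0 andbT -(mnorm0 R) -(subrr X) dist_pm_leB.
Qed.

Lemma dist_pm_triangle X Y Z : dist_pm X Z <= dist_pm X Y + dist_pm Y Z.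
Proof.
case: (dist_pmP X Y) => ->; case: (dist_pmP Y Z) => ->.
- apply: le_trans (dist_pm_leB _ _) _.
  have -> : X - Z = (X - Y) + (Y - Z) by rewrite addrA subrK.
  exact: mnormD.
- apply: le_trans (dist_pm_leD _ _) _.
  have -> : X + Z = (X - Y) + (Y + Z) by rewrite addrA subrK.
  exact: mnormD.
- apply: le_trans (dist_pm_leD _ _) _.
  have -> : X + Z = (X + Y) - (Y - Z) by rewrite opprB addrA addrAC addrK.
  exact: mnormB.
- apply: le_trans (dist_pm_leB _ _) _.
  have -> : X - Z = (X + Y) - (Y + Z) by rewrite opprD addrA addrK.
  exact: mnormB.
Qed.

Lemma dist_pm_eq0 X Y : dist_pm X Y = 0 -> X = Y \/ X = - Y.
Proof.
case: (dist_pmP X Y) => -> /mnorm_eq0 /eqP.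
- by rewrite subr_eq0 => /eqP; left.
- by rewrite addr_eq0 => /eqP; right.
Qed.

Lemma dist_pmMl A X Y : dist_pm (A * X) (A * Y) <= mnorm A * dist_pm X Y.
Proof.
case: (dist_pmP X Y) => ->.
- by apply: le_trans (dist_pm_leB _ _) _; rewrite -mulrBr mnormM.
- by apply: le_trans (dist_pm_leD _ _) _; rewrite -mulrDr mnormM.
Qed.

Lemma dist_pmMr A X Y : dist_pm (X * A) (Y * A) <= dist_pm X Y * mnorm A.
Proof.
case: (dist_pmP X Y) => ->.
- by apply: le_trans (dist_pm_leB _ _) _; rewrite -mulrBl mnormM.
- by apply: le_trans (dist_pm_leD _ _) _; rewrite -mulrDl mnormM.
Qed.

Lemma dist_pmM A B A' B' :
  dist_pm (A * B) (A' * B') <= mnorm A * dist_pm B B' + dist_pm A A' * mnorm B'.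
Proof.
apply: le_trans (dist_pm_triangle _ (A * B') _) _.
by apply: lerD; [apply: dist_pmMl | apply: dist_pmMr].
Qed.

Lemma mnorm_le_dist_pm X Y : mnorm X <= mnorm Y + dist_pm X Y.
Proof.
case: (dist_pmP X Y) => ->; first by have := lerB_mnorm X Y; lra.
by have := mnormB (X + Y) Y; rewrite addrK; lra.
Qed.

Lemma dist_pm_adj A B : dist_pm (\adj A) (\adj B) = dist_pm A B.
Proof.
have adjB : \adj A - \adj B = \adj (A - B).
  by apply: mx2P; rewrite !addmxE !oppmxE !adj2E /= !addmxE !oppmxE // opprD.
have adjD : \adj A + \adj B = \adj (A + B).
  by apply: mx2P; rewrite !addmxE !adj2E /= !addmxE // opprD.
by rewrite /dist_pm adjB adjD !mnorm_adj.
Qed.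

Lemma normalizeP X : normalize X = X \/ normalize X = - X.
Proof. by rewrite /normalize; case: ifP => _; tauto. Qed.

Lemma dist_pm_normalizel X Y : dist_pm (normalize X) Y = dist_pm X Y.
Proof. by case: (normalizeP X) => ->; rewrite ?dist_pmNl. Qed.

Lemma dist_pm_normalizer X Y : dist_pm X (normalize Y) = dist_pm X Y.
Proof. by case: (normalizeP Y) => ->; rewrite ?dist_pmNr. Qed.

Lemma dist_pm_normalizeMl X Y Z : dist_pm (normalize X * Y) Z = dist_pm (X * Y) Z.
Proof. by case: (normalizeP X) => ->; rewrite ?mulNr ?dist_pmNl. Qed.

End SignDistance.

Section PSL2Metric.
Variable R : realType.
Notation Mat := (Mat R).
Notation PSL2 := (PSL2 R).
Notation pone := (pone R).
Implicit Types p q g h : PSL2.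

Lemma pdistE p q : pdist p q = dist_pm (pmat p) (pmat q).
Proof. by []. Qed.

Lemma pmat_det p : \det (pmat p) = 1.
Proof. by case: p => A /= /andP[/eqP]. Qed.

Lemma pmat_normalized p : normalized (pmat p).
Proof. by case: p => A /= /andP[]. Qed.

Lemma pmat_inj : injective (@pmat R).
Proof. by case=> A hA [B hB] /= eAB; subst B; rewrite (bool_irrelevance hA hB). Qed.

Lemma pmat_neq_opp p q : pmat p <> - pmat q.
Proof.
have pos_cN z : pos_c z -> ~~ pos_c (- z).
  case: z => a b; rewrite /pos_c /= oppr_gt0 oppr_eq0.
  case/orP => [ha|/andP[/eqP -> hb]].
    by rewrite negb_or (lt_gtF ha) /= negb_and (gt_eqF ha).
  by rewrite ltxx /= eqxx /= oppr_gt0 -leNgt ltW.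
move=> e; have := pmat_normalized p; rewrite e /normalized lead_entryN => /pos_cN.
by rewrite opprK -/(normalized _) pmat_normalized.
Qed.

Lemma pmat_pm_inj p q : pmat p = pmat q \/ pmat p = - pmat q -> p = q.
Proof. by case=> [/pmat_inj //|/pmat_neq_opp]. Qed.

Lemma pdist_ge0 p q : 0 <= pdist p q.
Proof. exact: dist_pm_ge0. Qed.

Lemma pdistC p q : pdist p q = pdist q p.
Proof. exact: dist_pmC. Qed.

Lemma pdistxx p : pdist p p = 0.
Proof. exact: dist_pmxx. Qed.

Lemma pdist_triangle p q r : pdist p r <= pdist p q + pdist q r.
Proof. exact: dist_pm_triangle. Qed.

Lemma pdist_eq0 p q : pdist p q = 0 -> p = q.
Proof. by rewrite pdistE => /dist_pm_eq0 /pmat_pm_inj. Qed.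

Lemma mnorm_le_pdist g h : mnorm (pmat g) <= mnorm (pmat h) + pdist g h.
Proof. exact: mnorm_le_dist_pm. Qed.

Lemma pmat_pone : pmat pone = 1.
Proof.
have normalized1 : normalized (1 : Mat).
  by rewrite /normalized /lead_entry !mxE /= oner_eq0 /pos_c /= ltr01.
by rewrite /= /normalize normalized1.
Qed.

Lemma pmat_pmul p q : pmat (pmul p q) = normalize (pmat p * pmat q).
Proof. by rewrite /= mulmxE. Qed.

Lemma pmat_pinv p : pmat (pinv p) = normalize (\adj (pmat p)).
Proof. by rewrite /= /invmx unitmxE pmat_det unitr1 invr1 scale1r. Qed.

Lemma pmat_ppow g n : pmat (ppow g n) = pmat g ^+ n \/ pmat (ppow g n) = - pmat g ^+ n.
Proof.
elim: n => [|n IH]; first by left; rewrite [ppow g 0]/= pmat_pone expr0.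
rewrite [ppow g n.+1]/= -/(ppow g n) pmat_pmul exprS.
by case: (normalizeP (pmat g * pmat (ppow g n))) => ->; case: IH => ->;
  rewrite ?mulrN ?opprK; tauto.
Qed.

Lemma pdist_pmul p q p' q' :
  pdist (pmul p q) (pmul p' q') <= mnorm (pmat p) * pdist q q' + pdist p p' * mnorm (pmat q').
Proof. by rewrite !pdistE !pmat_pmul dist_pm_normalizel dist_pm_normalizer dist_pmM. Qed.

Lemma pdist_pinv p q : pdist (pinv p) (pinv q) = pdist p q.
Proof. by rewrite !pdistE !pmat_pinv dist_pm_normalizel dist_pm_normalizer dist_pm_adj. Qed.

Lemma pdist_pinvM g h : pdist (pmul (pinv g) h) pone <= mnorm (pmat g) * pdist g h.
Proof.
rewrite pdistE pmat_pmul pmat_pone dist_pm_normalizel pmat_pinv dist_pm_normalizeMl.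
have adjK : \adj (pmat g) * pmat g = 1 by rewrite -mulmxE mul_adj_mx pmat_det.
by rewrite -adjK -(mnorm_adj (pmat g)) pdistC pdistE dist_pmMl.
Qed.

Lemma pinvM_eq1 g h : pmul (pinv g) h = pone -> g = h.
Proof.
move/(congr1 (@pmat R)); rewrite pmat_pmul pmat_pone pmat_pinv => e.
have gadj : pmat g * \adj (pmat g) = 1 by rewrite -mulmxE mul_mx_adj pmat_det.
have gK X : pmat g * (\adj (pmat g) * X) = X by rewrite mulrA gadj mul1r.
have hY : \adj (pmat g) * pmat h = 1 \/ \adj (pmat g) * pmat h = - 1.
  have [eY|eY] := normalizeP (normalize (\adj (pmat g)) * pmat h); rewrite e in eY;
    case: (normalizeP (\adj (pmat g))) eY => ->; rewrite ?mulNr ?opprK => eY;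
    first [by left | by right; rewrite eY opprK].
apply: pmat_pm_inj; rewrite -[pmat h]gK.
by case: hY => ->; [left | right]; rewrite ?mulrN mulr1 ?opprK.
Qed.

Lemma pdist_ppow1 g n : pdist (ppow g n) pone = dist_pm (pmat g ^+ n) 1.
Proof. by rewrite pdistE pmat_pone; case: (pmat_ppow g n) => ->; rewrite ?dist_pmNl. Qed.

End PSL2Metric.

Section Escape.
Variable R : realType.
Notation Mat := (Mat R).
Implicit Types A N : Mat.

Lemma mx1E (i j : 'I_2) : (1 : Mat) i j = (i == j)%:R.
Proof. by rewrite mxE. Qed.

Lemma mxtrace1_2 : \tr (1 : Mat) = 2.
Proof. exact: mxtrace1. Qed.

Lemma mxtraceB1 A : \tr (A - 1) = \tr A - 2.
Proof. by rewrite !mxtrace2 !addmxE !oppmxE !mx1E /=; ring. Qed.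

Lemma mxtraceD1 A : \tr (A + 1) = \tr A + 2.
Proof. by rewrite !mxtrace2 !addmxE !mx1E /=; ring. Qed.

Lemma cayley_hamilton2 A : \det A = 1 -> A * A = \tr A *: A - 1.
Proof.
rewrite det2 mxtrace2 => hd.
apply: mx2P; rewrite mulmx2E addmxE oppmxE mxE mx1E /=.
- by rewrite -hd; ring.
- ring.
- ring.
- by rewrite -hd; ring.
Qed.

Lemma mxtrace_exprSS A k : \det A = 1 ->
  \tr (A ^+ k.+2) = \tr A * \tr (A ^+ k.+1) - \tr (A ^+ k).
Proof.
move=> hd; rewrite exprSr exprSr -mulrA cayley_hamilton2 // mulrBr mulr1.
by rewrite -scalerAr -exprSr mxtraceD mxtraceZ raddfN.
Qed.

(* l is an eigenvalue of A, l^-1 the other one *)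
Lemma mxtrace_expr_eigen A (l : R[i]) : \det A = 1 -> l != 0 -> l + l^-1 = \tr A ->
  forall k, \tr (A ^+ k) = l ^+ k + l^-1 ^+ k.
Proof.
move=> hd l0 hl.
suff h k : \tr (A ^+ k) = l ^+ k + l^-1 ^+ k /\
           \tr (A ^+ k.+1) = l ^+ k.+1 + l^-1 ^+ k.+1 by move=> k; case: (h k).
elim: k => [|k [IH1 IH2]]; first by rewrite !expr0 expr1 mxtrace1_2 hl.
by split => //; rewrite mxtrace_exprSS // IH1 IH2 -hl !exprS; field.
Qed.

Lemma dist_pm1_ge_trace A :
  Num.min (cabs (\tr A - 2)) (cabs (\tr A + 2)) <= dist_pm A 1.
Proof.
case: (dist_pmP A 1) => ->; apply: le_trans (mnorm_tr _).
- by rewrite mxtraceB1 ge_min lexx.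
- by rewrite mxtraceD1 ge_min lexx orbT.
Qed.

Lemma archi_mul_ge1 (c : R) : 0 < c -> exists k : nat, 1 <= k%:R * c.
Proof.
move=> c0; exists (Num.Def.archi_bound c^-1).
have ci : 0 <= c^-1 by rewrite invr_ge0 ltW.
move: (_%:R) (archi_boundP ci) => x /ltW h.
by rewrite -(@mulVf _ c) ?gt_eqF // ler_wpM2r // ltW.
Qed.

Lemma escape_parabolic A : \det A = 1 -> \tr A = 2 -> A != 1 ->
  exists k, 1/4 <= dist_pm (A ^+ k) 1.
Proof.
move=> hd ht hA; set N := A - 1.
have N2 : N * N = 0.
  rewrite /N mulrBr !mulrBl !mulr1 !mul1r cayley_hamilton2 // ht.
  by apply: mx2P; rewrite !addmxE !oppmxE !mxE /=; ring.
have AkE k : A ^+ k = 1 + k%:R *: N.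
  elim: k => [|k IH]; first by rewrite expr0 scale0r addr0.
  rewrite exprSr IH; have -> : A = 1 + N by rewrite /N addrC subrK.
  rewrite mulrDr mulr1 mulrDl mul1r -scalerAl N2 scaler0 addr0.
  by rewrite -addrA -natr1 scalerDl scale1r.
have N0 : 0 < mnorm N.
  rewrite lt_neqAle mnorm_ge0 andbT eq_sym; apply/eqP => /mnorm_eq0 /eqP.
  by rewrite subr_eq0 (negbTE hA).
have trN : \tr N = 0 by rewrite /N mxtraceB1 ht subrr.
have [k hk] := archi_mul_ge1 N0.
exists k; rewrite AkE.
case: (dist_pmP (1 + k%:R *: N) 1) => ->.
- by rewrite addrAC subrr add0r mnormZ cabs_natr; apply: le_trans hk; lra.
- apply: le_trans (mnorm_tr _).
  rewrite mxtraceD1 mxtraceD mxtraceZ trN mulr0 addr0 mxtrace1_2 -natrD cabs_natr; lra.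
Qed.

Lemma inv_unit_circle (z : R[i]) : cabs z = 1 ->
  complex.Re z^-1 = complex.Re z /\ complex.Im z^-1 = - complex.Im z.
Proof.
move=> h; have := cabs_sqr z; rewrite h expr1n.
by case: z {h} => a b /= <-; rewrite !divr1.
Qed.

(* otherwise Re of the geometric sums S n grows like n / 2, while |S n| <= 2 / |nu - 1| *)
Lemma unit_circle_power_Re_lt (nu : R[i]) : cabs nu = 1 -> nu != 1 ->
  exists k, complex.Re (nu ^+ k) < 1/2.
Proof.
move=> h1 hn1; apply: NNPP => hn.
have hk k : 1/2 <= complex.Re (nu ^+ k).
  by rewrite leNgt; apply/negP => h; apply: hn; exists k.
pose S n := \sum_(k < n) nu ^+ k.
have SS n : S n.+1 = S n + nu ^+ n by rewrite /S big_ord_recr.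
have geomS n : (nu - 1) * S n = nu ^+ n - 1.
  elim: n => [|n IH]; first by rewrite /S big_ord0 mulr0 expr0 subrr.
  by rewrite SS mulrDr IH exprS; ring.
have ReS n : n%:R / 2 <= complex.Re (S n).
  elim: n => [|n IH]; first by rewrite /S big_ord0 mul0r.
  by rewrite SS ReD -natr1 mulrDl lerD.
set c := cabs (nu - 1).
have c0 : 0 < c by apply: cabs_gt0; rewrite subr_eq0.
have Sbound n : c * cabs (S n) <= 2.
  rewrite -cabsM geomS; apply: le_trans (cabsB _ _) _.
  by rewrite cabsX h1 expr1n cabs1; lra.
have [k hk1] := archi_mul_ge1 (divr_gt0 c0 (ltr0n _ 8)).
have := ReS k; have := Sbound k.
have ReS_le : complex.Re (S k) <= cabs (S k) by apply: le_trans (ler_norm _) (cabs_Re _).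
have : c * (k%:R / 2) <= c * cabs (S k).
  by apply: ler_wpM2l; [lra | apply: le_trans (ReS k) ReS_le].
nra.
Qed.

Lemma cabs_ge_subr (u v w : R[i]) : cabs u - cabs v - cabs w <= cabs (u + v + w).
Proof.
have e : u = (u + v + w) - v - w by ring.
have := cabsB (u + v + w - v) w; have := cabsB (u + v + w) v.
rewrite -e; lra.
Qed.

Lemma escape_elliptic A (l : R[i]) : \det A = 1 -> l != 0 -> l + l^-1 = \tr A ->
  cabs l = 1 -> l ^+ 2 != 1 -> exists k, 1/4 <= dist_pm (A ^+ k) 1.
Proof.
move=> hd l0 hl l1 l2_neq1.
have [k hk] : exists k, complex.Re ((l ^+ 2) ^+ k) < 1/2.
  by apply: unit_circle_power_Re_lt; rewrite // cabsX l1 expr1n.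
exists k; apply: le_trans (dist_pm1_ge_trace _).
rewrite (mxtrace_expr_eigen hd l0 hl) exprVn.
set mu := l ^+ k.
have mu1 : cabs mu = 1 by rewrite /mu cabsX l1 expr1n.
have [Re_inv Im_inv] := inv_unit_circle mu1.
have := cabs_sqr mu; rewrite mu1 expr1n.
rewrite -exprM mulnC exprM -/mu expr2 ReM in hk.
set a := complex.Re mu in hk Re_inv *; set b := complex.Im mu in hk Im_inv *.
move=> hab; have a_lt : `|a| < 7/8 by rewrite ltr_norml; apply/andP; split; nra.
have lo : forall s : R[i], complex.Re s = 2 ->
    1/4 <= `|complex.Re (mu + mu^-1 - s)| /\ 1/4 <= `|complex.Re (mu + mu^-1 + s)|.
  move=> s s2; rewrite !ReD ReN Re_inv s2 -/a !ler_normr.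
  by move: a_lt; rewrite ltr_norml => /andP[] *; split; apply/orP; [right | left]; lra.
have [lo_sub lo_add] := lo _ (@Re_natr R 2).
by rewrite le_min (le_trans lo_sub (cabs_Re _)) (le_trans lo_add (cabs_Re _)).
Qed.

Lemma bernoulli_ineq (x : R) k : 1 <= x -> 1 + k%:R * (x - 1) <= x ^+ k.
Proof.
move=> hx; elim: k => [|k IH]; first by rewrite mul0r addr0 expr0.
rewrite exprS -natr1.
have h2 : (1 + k%:R * (x - 1)) * x <= x ^+ k * x by apply: ler_wpM2r; lra.
have h3 : 0 <= k%:R * ((x - 1) * (x - 1)) by apply: mulr_ge0 => //; nra.
rewrite [x * _]mulrC; nra.
Qed.

Lemma escape_loxodromic A (r : R[i]) : \det A = 1 -> r != 0 -> r + r^-1 = \tr A ->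
  1 < cabs r -> exists k, 1/4 <= dist_pm (A ^+ k) 1.
Proof.
move=> hd r0 hr r1.
have [k hk] := @archi_mul_ge1 ((cabs r - 1) / 4) ltac:(lra).
exists k; apply: le_trans (dist_pm1_ge_trace _).
rewrite (mxtrace_expr_eigen hd r0 hr) exprVn.
have X5 : 5 <= cabs (r ^+ k) by rewrite cabsX; have := bernoulli_ineq k (ltW r1); lra.
have Xinv : cabs (r ^+ k)^-1 <= 1/5.
  by rewrite cabsV div1r lef_pV2 ?posrE //; lra.
have c2 : cabs (2 : R[i]) = 2 by rewrite cabs_natr.
have := cabs_ge0 (r ^+ k)^-1 => inv_ge0.
rewrite le_min; apply/andP; split; apply: le_trans (cabs_ge_subr _ _ _).
- by rewrite cabsN c2; lra.
- by rewrite c2; lra.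
Qed.

Lemma oppr_expr_pm A k : (- A) ^+ k = A ^+ k \/ (- A) ^+ k = - A ^+ k.
Proof.
elim: k => [|k IH]; first by left; rewrite !expr0.
by rewrite !exprS; case: IH => ->; rewrite ?mulrN ?mulNr ?opprK; tauto.
Qed.

(* Case analysis on the eigenvalues l, l^-1: parabolic, elliptic or loxodromic. *)
Lemma escape_SL2 A : \det A = 1 -> A != 1 -> A != - 1 ->
  exists k, 1/4 <= dist_pm (A ^+ k) 1.
Proof.
move=> hd hA1 hA2.
have [ht2|ht2] := eqVneq (\tr A) 2; first exact: escape_parabolic.
have [htm2|htm2] := eqVneq (\tr A) (- 2).
  have hdN : \det (- A) = 1 by rewrite -scaleN1r detZ expr2 mulrNN !mul1r.
  have htN : \tr (- A) = 2 by rewrite mxtrace2 !oppmxE -opprD -mxtrace2 htm2 opprK.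
  have hAN : - A != 1 by rewrite eqr_oppLR.
  have [k hk] := escape_parabolic hdN htN hAN.
  by exists k; case: (oppr_expr_pm A k) hk => ->; rewrite ?dist_pmNl.
set t := \tr A in ht2 htm2 *.
set l := (t + sqrtC (t ^+ 2 - 4)) / 2.
have l_root : l ^+ 2 - t * l + 1 = 0.
  have -> : l ^+ 2 - t * l + 1 = (sqrtC (t ^+ 2 - 4) ^+ 2 - t ^+ 2 + 4) / 4 by rewrite /l; field.
  by rewrite sqrtCK; ring.
have l0 : l != 0.
  by apply/eqP => e; move: l_root; rewrite e expr0n /= mulr0 subrr add0r => /eqP; rewrite oner_eq0.
have hlt : l + l^-1 = t.
  apply: (mulIf l0); rewrite mulrDl mulVf // -expr2.
  by move/eqP: l_root; rewrite addrAC subr_eq0 => /eqP ->.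
have l2 : l ^+ 2 != 1.
  apply/eqP => e; have linv : l^-1 = l by apply: (mulIf l0); rewrite mulVf // -expr2 e.
  have : (t - 2) * (t + 2) = 0.
    rewrite -hlt linv (_ : (l + l - 2) * (l + l + 2) = 4 * (l ^+ 2 - 1)); last by ring.
    by rewrite e subrr mulr0.
  by move/eqP; rewrite mulf_eq0 subr_eq0 addr_eq0 (negbTE ht2) (negbTE htm2).
have [l_lt1|l_gt1|l_eq1] := ltgtP (cabs l) 1.
- apply: (@escape_loxodromic A l^-1) => //; rewrite ?invr_eq0 ?invrK 1?addrC //.
  by rewrite cabsV invf_gt1 // cabs_gt0.
- exact: (@escape_loxodromic A l).
- exact: (@escape_elliptic A l).
Qed.

End Escape.

Section Compactness.
Variable R : realType.
Notation Mat := (Mat R).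
Notation PSL2 := (PSL2 R).

Lemma le0_lt_all (x : R) : (forall e, 0 < e -> x < e) -> x <= 0.
Proof. by move=> h; rewrite leNgt; apply/negP => x0; have := h x x0; rewrite ltxx. Qed.

Lemma increasing_seq_geq (f : nat -> nat) : increasing_seq f -> forall n, (n <= f n)%N.
Proof. by move/increasing_seqP => hf; elim=> // n IH; apply: leq_ltn_trans IH (hf n). Qed.

Lemma rconv_subseq (u : nat -> R) l (f : nat -> nat) :
  increasing_seq f -> rconv u l -> rconv (u \o f) l.
Proof.
move=> hf hu e e0; have [N hN] := hu e e0; exists N => n hn.
by apply: hN; apply: leq_trans hn (increasing_seq_geq hf n).
Qed.

Lemma bounded_subseq_rconv (u : nat -> R) (M : R) : (forall n, `|u n| <= M) ->
  exists2 f : nat -> nat, increasing_seq f & exists l, rconv (u \o f) l.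
Proof.
move=> hM.
have bu : bounded_fun u.
  exists M; split; first by rewrite num_real.
  by move=> x Mx y _ /=; apply: ltW; apply: le_lt_trans (hM y) Mx.
have [f finc /cvg_ex[l hl]] := bolzano_weierstrass bu.
exists f => //; exists l => e e0.
have [N _ hN] := (fcvgrPdist_lt _).1 hl e e0.
by exists N => n hn; rewrite distrC; apply: hN.
Qed.

Lemma bounded_subseq_rconv_list (T : Type) (x : nat -> T) (cs : list (T -> R)) (M : R) :
  (forall c, In c cs -> forall n, `|c (x n)| <= M) ->
  exists2 f : nat -> nat, increasing_seq f &
    forall c, In c cs -> exists l, rconv (c \o x \o f) l.
Proof.
elim: cs => [|c cs IH] hb; first by exists id.
have [f hf hl] := IH (fun c' hc' => hb c' (or_intror hc')).
have [g hg [l hl2]] := bounded_subseq_rconv (fun n => hb c (or_introl erefl) (f n)).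
exists (f \o g) => [m n /=|c' [<-|hc']]; first by rewrite hf; apply: hg.
  by exists l.
by have [l' hl'] := hl c' hc'; exists l'; exact: (rconv_subseq hg hl').
Qed.

Lemma rconv_complex (x : nat -> R[i]) a b :
  rconv (fun n => complex.Re (x n)) a -> rconv (fun n => complex.Im (x n)) b ->
  forall e, 0 < e -> exists N, forall n, (N <= n)%N -> cabs (x n - Complex a b) < e.
Proof.
move=> ha hb e e0; have e2 : 0 < e / 2 by lra.
have [N1 h1] := ha _ e2; have [N2 h2] := hb _ e2.
exists (maxn N1 N2) => n; rewrite geq_max => /andP[n1 n2].
apply: le_lt_trans (cabs_le_ReIm _) _.
by rewrite ReD ImD ReN ImN /=; have := h1 n n1; have := h2 n n2; lra.
Qed.

Lemma bounded_subseq_mxconv (X : nat -> Mat) (M : R) : (forall n, mnorm (X n) <= M) ->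
  exists2 f : nat -> nat, increasing_seq f & exists L : Mat,
    forall e, 0 < e -> exists N, forall n, (N <= n)%N -> mnorm (X (f n) - L) < e.
Proof.
move=> hM.
pose cs : list (Mat -> R) :=
  [:: (fun A : Mat => complex.Re (A 0 0)); (fun A : Mat => complex.Im (A 0 0));
      (fun A : Mat => complex.Re (A 0 1)); (fun A : Mat => complex.Im (A 0 1));
      (fun A : Mat => complex.Re (A 1 0)); (fun A : Mat => complex.Im (A 1 0));
      (fun A : Mat => complex.Re (A 1 1)); (fun A : Mat => complex.Im (A 1 1))].
have hb : forall c, In c cs -> forall n, `|c (X n)| <= M.
  move=> c hc n.
  have hRe i j : `|complex.Re (X n i j)| <= M.
    exact: le_trans (cabs_Re _) (le_trans (mnorm_entry _ i j) (hM n)).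
  have hIm i j : `|complex.Im (X n i j)| <= M.
    exact: le_trans (cabs_Im _) (le_trans (mnorm_entry _ i j) (hM n)).
  by move: hc; do 8! (case=> [<-|]; first by [apply: hRe | apply: hIm]).
have [f hf hl] := bounded_subseq_rconv_list hb.
have lim k : (k < 8)%N -> exists l, rconv (nth k cs (fun=> 0) \o X \o f) l.
  by move=> hk; apply: hl; apply: nth_In; apply/ssrnat.ltP.
have [a1 h1] := lim 0%N isT; have [a2 h2] := lim 1%N isT.
have [a3 h3] := lim 2%N isT; have [a4 h4] := lim 3%N isT.
have [a5 h5] := lim 4%N isT; have [a6 h6] := lim 5%N isT.
have [a7 h7] := lim 6%N isT; have [a8 h8] := lim 7%N isT.
have c00 := rconv_complex h1 h2; have c01 := rconv_complex h3 h4.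
have c10 := rconv_complex h5 h6; have c11 := rconv_complex h7 h8.
pose L : Mat := \matrix_(i, j) if i == 0 then (if j == 0 then Complex a1 a2 else Complex a3 a4)
                               else (if j == 0 then Complex a5 a6 else Complex a7 a8).
exists f => //; exists L => e e0; have e4 : 0 < e / 4 by lra.
have [N1 hN1] := c00 _ e4; have [N2 hN2] := c01 _ e4.
have [N3 hN3] := c10 _ e4; have [N4 hN4] := c11 _ e4.
exists (maxn (maxn N1 N2) (maxn N3 N4)) => n; rewrite !geq_max => /andP[/andP[n1 n2] /andP[n3 n4]].
have := hN1 n n1; have := hN2 n n2; have := hN3 n n3; have := hN4 n n4.
rewrite mnorm2E !addmxE !oppmxE !mxE /=; lra.
Qed.

Lemma cabs_detB (X Y : Mat) :
  cabs (\det X - \det Y) <= 2 * mnorm (X - Y) * (mnorm X + mnorm Y).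
Proof.
have -> : \det X - \det Y = X 0 0 * (X - Y) 1 1 + (X - Y) 0 0 * Y 1 1
    - (X 0 1 * (X - Y) 1 0 + (X - Y) 0 1 * Y 1 0) by rewrite !det2 !addmxE !oppmxE; ring.
have e (A B : Mat) i j k l : cabs (A i j * B k l) <= mnorm A * mnorm B.
  by rewrite cabsM ler_pM ?cabs_ge0 ?mnorm_entry.
apply: le_trans (cabsB _ _) _; apply: le_trans (lerD (cabsD _ _) (cabsD _ _)) _.
have := e X (X - Y) 0 0 1 1; have := e (X - Y) Y 0 0 1 1.
have := e X (X - Y) 0 1 1 0; have := e (X - Y) Y 0 1 1 0.
rewrite [mnorm (X - Y) * mnorm Y]mulrC; lra.
Qed.

Lemma det_limit_eq1 (X : nat -> Mat) (L : Mat) (M : R) :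
  (forall n, \det (X n) = 1) -> (forall n, mnorm (X n) <= M) ->
  (forall e, 0 < e -> exists N, forall n, (N <= n)%N -> mnorm (X n - L) < e) ->
  \det L = 1.
Proof.
move=> hdet hM hconv.
have M0 : 0 <= M by apply: le_trans (mnorm_ge0 _) (hM 0%N).
suff : cabs (1 - \det L) <= 0.
  move=> h; have /cabs_eq0/eqP : cabs (1 - \det L) = 0 by apply/eqP; rewrite eq_le h cabs_ge0.
  by rewrite subr_eq0 => /eqP <-.
apply: le0_lt_all => e e0.
have [N hN] := hconv (Num.min 1 (e / (4 * M + 2))) ltac:(rewrite lt_min ltr01 divr_gt0 //; lra).
have := hN N (leqnn N); rewrite lt_min => /andP[d1 de].
have ML : mnorm L <= M + mnorm (X N - L).
  have := mnormB (X N) (X N - L).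
  rewrite (_ : X N - (X N - L) = L); last by rewrite opprB addrCA subrr addr0.
  by have := hM N; lra.
have d0 := mnorm_ge0 (X N - L).
have sum_le : mnorm (X N) + mnorm L <= 2 * M + 1 by have := hM N; lra.
have := cabs_detB (X N) L; rewrite hdet.
have : 2 * mnorm (X N - L) * (mnorm (X N) + mnorm L) <= 2 * mnorm (X N - L) * (2 * M + 1).
  by apply: ler_wpM2l => //; lra.
have : mnorm (X N - L) * (4 * M + 2) < e by rewrite -ltr_pdivlMr //; lra.
lra.
Qed.

Lemma bounded_psl_cluster (psi : nat -> PSL2) (M : R) :
  (forall n, mnorm (pmat (psi n)) <= M) -> exists g, paccum psi g.
Proof.
move=> hM.
have [f hf [L hL]] := bounded_subseq_mxconv hM.
have detL : \det L = 1.
  by apply: (det_limit_eq1 (X := fun n => pmat (psi (f n)))) hL => n; rewrite ?pmat_det ?hM.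
exists (MkPSL2 (is_psl_normalize detL)) => e e0 N.
have [N' hN'] := hL e e0.
exists (f (maxn N N')); first by apply: leq_trans (increasing_seq_geq hf _); rewrite leq_maxl.
rewrite pdistE /= dist_pm_normalizer; apply: le_lt_trans (dist_pm_leB _ _) _.
by apply: hN'; rewrite leq_maxr.
Qed.

End Compactness.

Section IntervalConnected.
Variable R : realType.
Implicit Types I P : R -> Prop.

Definition rel_open I P := forall t, I t -> P t ->
  exists2 d : R, 0 < d & forall t', I t' -> `|t' - t| < d -> P t'.

Definition rel_closed I P := forall t, I t ->
  (forall d : R, 0 < d -> exists t', [/\ I t', `|t' - t| < d & P t']) -> P t.

(* the supremum of the points up to which P holds on [p, t] satisfies P and cannot lie below t *)
Lemma clopen_interval_ge I P p : Defs.is_interval I -> I p -> P p ->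
  rel_open I P -> rel_closed I P -> forall t, I t -> p <= t -> P t.
Proof.
move=> hI Ip Pp ho hc t It pt; apply: NNPP => nPt.
pose S : set R := fun u => p <= u <= t /\ forall v, p <= v <= u -> P v.
have Sp : S p.
  split; first by rewrite lexx pt.
  by move=> v /andP[h1 h2]; have -> : v = p by apply/eqP; rewrite eq_le h1 h2.
have hs : has_sup S by split; [exists p | exists t => u [/andP[_ ->]]].
set sg := sup S.
have ub : ubound S sg := sup_upper_bound hs.
have psg : p <= sg by apply: ub.
have sgt : sg <= t by apply: ge_sup; [exists p | move=> u [/andP[_ h] _]].
have Isg : I sg by apply: (hI p t); rewrite ?psg ?sgt.
have below v : p <= v < sg -> P v.
  move=> /andP[pv vs]; have e0 : 0 < sg - v by rewrite subr_gt0.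
  have [u [_ Pu] hu] := sup_adherent e0 hs.
  by apply: Pu; rewrite pv /=; rewrite -/sg in hu; lra.
have Psg : P sg.
  apply: hc => // d d0; have [u [/andP[pu ut] Pu] hu] := sup_adherent d0 hs.
  have usg : u <= sg by apply: ub; split => //; rewrite pu ut.
  exists u; split; first by apply: (hI p t); rewrite ?pu ?ut.
    by rewrite -/sg in hu; rewrite ler0_norm ?subr_le0 //; lra.
  by apply: Pu; rewrite pu lexx.
have sglt : sg < t by rewrite lt_neqAle sgt andbT; apply: contra_notN nPt => /eqP <-.
have [d d0 hd] := ho _ Isg Psg.
set u := Num.min (sg + d / 2) t.
have Su : S u.
  split; first by rewrite /u le_min ge_min lexx orbT andbT; apply/andP; split; lra.
  move=> v /andP[pv vu].
  have [vs|sv] := ltP v sg; first by apply: below; rewrite pv vs.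
  move: vu; rewrite le_min => /andP[vd vt].
  apply: hd; first by apply: (hI p t); rewrite ?pv ?vt.
  by rewrite ger0_norm ?subr_ge0 //; lra.
have : sg < u by rewrite lt_min; apply/andP; split; lra.
by have := ub _ Su; lra.
Qed.

Lemma clopen_interval I P p : Defs.is_interval I -> I p -> P p ->
  rel_open I P -> rel_closed I P -> forall t, I t -> P t.
Proof.
move=> hI Ip Pp ho hc t It.
have [pt|tp] := leP p t; first exact: (clopen_interval_ge hI Ip Pp ho hc It pt).
pose I' x := I (- x); pose P' x := P (- x).
have hI' : Defs.is_interval I'.
  move=> a b x Ia Ib /andP[h1 h2]; apply: (hI (- b) (- a)) => //; apply/andP; split; lra.
have distN (x y : R) : `|- x - - y| = `|x - y| by rewrite -normrN opprD !opprK.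
have ho' : rel_open I' P'.
  move=> x Ix Px; have [d d0 hd] := ho _ Ix Px.
  by exists d => // x' Ix' hx; apply: hd; rewrite ?distN.
have hc' : rel_closed I' P'.
  move=> x Ix h; apply: hc => // d d0; have [x' [I1 h1 h2]] := h d d0.
  by exists (- x'); rewrite distN.
have := @clopen_interval_ge I' P' (- p) hI'; rewrite /I' /P' !opprK.
by move=> /(_ Ip Pp ho' hc' (- t)); rewrite opprK => /(_ It); apply; lra.
Qed.

End IntervalConnected.

Section PSL2Escape.
Variable R : realType.
Notation PSL2 := (PSL2 R).
Notation pone := (pone R).

Lemma ppow_escape (g : PSL2) : g <> pone -> exists k, 1/4 <= pdist (ppow g k) pone.
Proof.
move=> g1; have g1' : pmat g != 1.
  by apply: contra_notN g1 => /eqP e; apply: pmat_inj; rewrite e pmat_pone.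
have gN1 : pmat g != - 1.
  by apply/eqP => e; apply: (@pmat_neq_opp R g pone); rewrite e pmat_pone.
have [k hk] := escape_SL2 (pmat_det g) g1' gN1.
by exists k; rewrite pdist_ppow1.
Qed.

(* the first power leaving the ball of radius rho overshoots it by at most (2 + rho) d(g, 1) *)
Lemma ppow_annulus (g : PSL2) (rho : R) : g <> pone -> 0 < rho <= 1/4 ->
  exists k, rho <= pdist (ppow g k) pone <= rho + (2 + rho) * pdist g pone.
Proof.
move=> g1 /andP[r0 r4].
have ex : exists k, rho <= pdist (ppow g k) pone.
  by have [k hk] := ppow_escape g1; exists k; apply: le_trans r4 hk.
case: (ex_minnP ex) => m Pm mmin.
case: m Pm mmin => [|m] Pm mmin; first by move: Pm; rewrite pdistxx; lra.
have Pm' : pdist (ppow g m) pone < rho by rewrite ltNge; apply/negP => /mmin; rewrite ltnn.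
exists m.+1; rewrite Pm andTb pdist_ppow1 pdistE pmat_pone.
rewrite pdist_ppow1 in Pm'.
set A := pmat g.
have step : dist_pm (A ^+ m.+1) 1 <= dist_pm (A ^+ m) 1 + mnorm (A ^+ m) * dist_pm A 1.
  rewrite exprSr; apply: le_trans (dist_pm_triangle _ (A ^+ m) _) _.
  by rewrite addrC lerD2l; have := dist_pmMl (A ^+ m) A 1; rewrite mulr1.
have := mnorm_le_dist_pm (A ^+ m) 1; rewrite mnorm1 => normAm.
have : mnorm (A ^+ m) * dist_pm A 1 <= (2 + rho) * dist_pm A 1.
  by apply: ler_wpM2r; [exact: dist_pm_ge0 | lra].
lra.
Qed.

End PSL2Escape.

Section Sequences.
Variable R : realType.

Lemma invSn_gt0 n : (0 : R) < (n.+1%:R)^-1.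
Proof. by rewrite invr_gt0 ltr0n. Qed.

Lemma invSn_lt (e : R) : 0 < e -> exists N, forall n, (N <= n)%N -> (n.+1%:R)^-1 < e.
Proof.
move=> e0; have [k hk] := archi_mul_ge1 e0; exists k => n hn.
rewrite -[X in X < _]div1r ltr_pdivrMr ?ltr0n // -natr1.
have : k%:R * e <= n%:R * e by rewrite ler_wpM2r ?ler_nat // ltW.
lra.
Qed.

Lemma rconv_invSn (u : nat -> R) t : (forall n, `|u n - t| < (n.+1%:R)^-1) -> rconv u t.
Proof.
move=> h e e0; have [N hN] := invSn_lt e0.
by exists N => n hn; apply: lt_trans (h n) (hN n hn).
Qed.

End Sequences.

Section UniformDiscreteness.
Variable R : realType.
Notation PSL2 := (PSL2 R).
Notation pone := (pone R).
Variable Gam : R -> PSL2 -> Prop.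
Hypothesis hG : cont_path_D Gam.

Lemma Gam_subgroup t : unit_int t -> psubgroup (Gam t).
Proof. by case: hG => h _ /h []. Qed.

Lemma Gam_discrete t : unit_int t -> pdiscrete (Gam t).
Proof. by case: hG => h _ /h [_ []]. Qed.

Lemma Gam_one t : unit_int t -> Gam t pone.
Proof. by case/Gam_subgroup. Qed.

Lemma Gam_mul t g h : unit_int t -> Gam t g -> Gam t h -> Gam t (pmul g h).
Proof. by case/Gam_subgroup => _ [+ _]; apply. Qed.

Lemma Gam_inv t g : unit_int t -> Gam t g -> Gam t (pinv g).
Proof. by case/Gam_subgroup => _ [_]; apply. Qed.

Lemma Gam_ppow t g n : unit_int t -> Gam t g -> Gam t (ppow g n).
Proof. by move=> ht hg; elim: n => [|n IH]; [apply: Gam_one | apply: Gam_mul]. Qed.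

Lemma Gam_chabauty (u : nat -> R) t : (forall n, unit_int (u n)) -> unit_int t -> rconv u t ->
  chabauty_conv (fun n => Gam (u n)) (Gam t).
Proof. by case: hG => _; apply. Qed.

Lemma Gam_cluster (u : nat -> R) t (x : nat -> PSL2) (M : R) :
  (forall n, unit_int (u n)) -> unit_int t -> rconv u t ->
  (forall n, Gam (u n) (x n)) -> (forall n, mnorm (pmat (x n)) <= M) ->
  exists2 c, Gam t c & paccum x c.
Proof.
move=> hu ht ut hx hM; have [c hc] := bounded_psl_cluster hM.
by exists c => //; have [+ _] := Gam_chabauty hu ht ut; apply.
Qed.

Lemma Gam_cluster_annulus (u : nat -> R) t0 (h : nat -> PSL2) (rho : R) :
  0 < rho <= 1/4 -> (forall n, unit_int (u n)) -> unit_int t0 -> rconv u t0 ->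
  (forall n, Gam (u n) (h n)) ->
  (forall n, rho <= pdist (h n) pone <= rho + 3 * (n.+1%:R)^-1) ->
  exists2 c, Gam t0 c & c <> pone /\ pdist c pone <= rho.
Proof.
move=> /andP[r0 r4] hu ht0 ut0 hin h_annulus.
have hbd n : mnorm (pmat (h n)) <= 6.
  have := mnorm_le_pdist (h n) pone; rewrite pmat_pone mnorm1.
  have : (n.+1%:R : R)^-1 <= 1 by rewrite invf_le1 ?ler1n ?ltr0n.
  by case/andP: (h_annulus n) => _; move: (n.+1%:R^-1) => x *; lra.
have [c Gc hc] := Gam_cluster hu ht0 ut0 hin hbd.
exists c => //; split.
  move=> c1; have [n _] := hc (rho / 2) ltac:(lra) 0%N.
  by rewrite c1; case/andP: (h_annulus n) => *; lra.
rewrite -subr_le0; apply: le0_lt_all => z z0.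
have [N hN] := @invSn_lt _ (z / 6) ltac:(lra).
have [m hm hmc] := hc (z / 2) ltac:(lra) N.
have := pdist_triangle c (h m) pone; rewrite [pdist c (h m)]pdistC.
by case/andP: (h_annulus m) => _; have := hN m hm; move: (m.+1%:R^-1) => x *; lra.
Qed.

(* Elements of Gam t close to 1 would have powers at distance about rho from 1 converging
   to a nontrivial element of Gam t0 near 1. *)
Lemma uniformly_discrete_at1 t0 : unit_int t0 ->
  exists2 eps : R, 0 < eps & exists2 del : R, 0 < del & forall t, unit_int t ->
    `|t - t0| < del -> forall g, Gam t g -> pdist g pone < eps -> g = pone.
Proof.
move=> ht0; have [e0 e0p he0] := Gam_discrete ht0 (Gam_one ht0).
set rho := Num.min (e0 / 2) (1/4).
have r0 : 0 < rho <= 1/4 by rewrite lt_min ge_min lexx orbT andbT; apply/andP; split; lra.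
have re : rho <= e0 / 2 by rewrite /rho ge_min lexx.
apply: NNPP => hn.
have /choice[tg htg] : forall n, exists tg : R * PSL2, [/\ unit_int tg.1,
    `|tg.1 - t0| < (n.+1%:R)^-1, Gam tg.1 tg.2, pdist tg.2 pone < (n.+1%:R)^-1 & tg.2 <> pone].
  move=> n; apply: NNPP => hnn; apply: hn.
  exists (n.+1%:R)^-1; first exact: invSn_gt0.
  exists (n.+1%:R)^-1; first exact: invSn_gt0.
  move=> t ht htd g hg hgd; apply: NNPP => hne; apply: hnn.
  by exists (t, g).
have /choice[ks hks] : forall n, exists k,
    rho <= pdist (ppow (tg n).2 k) pone <= rho + 3 * (n.+1%:R)^-1.
  move=> n; have [_ _ _ hd hne] := htg n; case/andP: (r0) => r0' r4.
  have [k /andP[k1 k2]] := ppow_annulus hne r0.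
  exists k; rewrite k1; apply: le_trans k2 _.
  by rewrite lerD2l; apply: ler_pM; [lra | exact: pdist_ge0 | lra | exact: ltW].
have tg_int n : unit_int (tg n).1 by case: (htg n).
have tg_conv : rconv (fun n => (tg n).1) t0 by apply: rconv_invSn => n; case: (htg n).
have h_in n : Gam (tg n).1 (ppow (tg n).2 (ks n)) by case: (htg n) => *; apply: Gam_ppow.
have [c Gc [c1 cr]] := Gam_cluster_annulus r0 tg_int ht0 tg_conv h_in hks.
by apply/c1/he0 => //; lra.
Qed.

Lemma uniformly_discrete t0 : unit_int t0 ->
  exists2 eps : R, 0 < eps & exists2 del : R, 0 < del & forall t, unit_int t ->
    `|t - t0| < del -> forall g h, Gam t g -> Gam t h -> mnorm (pmat g) * pdist g h < eps -> g = h.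
Proof.
move=> ht0; have [eps ep [del dp hd]] := uniformly_discrete_at1 ht0.
exists eps => //; exists del => // t ht htd g h hg hh hgh.
apply: pinvM_eq1; apply: (hd t ht htd); first by apply: Gam_mul => //; apply: Gam_inv.
exact: le_lt_trans (pdist_pinvM g h) hgh.
Qed.

End UniformDiscreteness.

Section NearSequences.
Variable R : realType.
Notation PSL2 := (PSL2 R).

Lemma not_near_seq (D P : R -> Prop) s :
  ~ (exists2 d : R, 0 < d & forall t, D t -> `|t - s| < d -> P t) ->
  exists u : nat -> R, (forall n, D (u n) /\ ~ P (u n)) /\ rconv u s.
Proof.
move=> hn; have /choice[u hu] : forall n, exists t, [/\ D t, `|t - s| < (n.+1%:R)^-1 & ~ P t].
  move=> n; apply: NNPP => hn2; apply: hn; exists (n.+1%:R)^-1; first exact: invSn_gt0.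
  by move=> t Dt ht; apply: NNPP => nPt; apply: hn2; exists t.
exists u; split; first by move=> n; case: (hu n).
by apply: rconv_invSn => n; case: (hu n).
Qed.

Definition cont_within (I : R -> Prop) (j : R -> PSL2) (t : R) : Prop :=
  forall e, 0 < e -> exists2 d : R, 0 < d &
    forall t', I t' -> `|t' - t| < d -> pdist (j t') (j t) < e.

Lemma cont_within_paccum (I : R -> Prop) (j : R -> PSL2) t :
  (forall u, (forall n, I (u n)) -> rconv u t -> paccum (fun n => j (u n)) (j t)) ->
  cont_within I j t.
Proof.
move=> hacc e e0; apply: NNPP => /not_near_seq[u [hu ut]].
have [n _] := hacc u (fun n => (hu n).1) ut e e0 0%N.
by apply: (hu n).2.
Qed.

End NearSequences.

Section GammaPaths.
Variable R : realType.
Notation PSL2 := (PSL2 R).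
Notation pone := (pone R).
Variable Gam : R -> PSL2 -> Prop.
Hypothesis hG : cont_path_D Gam.
Implicit Types (I : R -> Prop) (j : R -> PSL2).

Definition window (s d t : R) : Prop := unit_int t /\ `|t - s| < d.

Lemma window_interval s d : Defs.is_interval (window s d).
Proof.
move=> a b x [/andP[a0 a1] ha] [/andP[b0 b1] hb] /andP[ax xb].
split; first by apply/andP; split; lra.
by move: ha hb; rewrite !ltr_norml => /andP[? ?] /andP[? ?]; apply/andP; split; lra.
Qed.

Lemma window_center s d : unit_int s -> 0 < d -> window s d s.
Proof. by move=> hs d0; split; rewrite // subrr normr0. Qed.

Lemma interval_meet I1 I2 : Defs.is_interval I1 -> Defs.is_interval I2 ->
  Defs.is_interval (fun t => I1 t /\ I2 t).
Proof. by move=> h1 h2 a b x [a1 a2] [b1 b2] hx; split; [apply: (h1 a b) | apply: (h2 a b)]. Qed.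

Lemma cont_within_sub I I' j t : (forall t', I' t' -> I t') -> cont_within I j t ->
  cont_within I' j t.
Proof.
move=> sub hc e e0; have [d d0 hd] := hc e e0.
by exists d => // t' It' ht'; apply: hd => //; apply: sub.
Qed.

Lemma cont_within_pmul I j1 j2 t : cont_within I j1 t -> cont_within I j2 t ->
  cont_within I (fun t => pmul (j1 t) (j2 t)) t.
Proof.
move=> hc1 hc2 e e0.
set M1 := mnorm (pmat (j1 t)) + 1; set M2 := mnorm (pmat (j2 t)) + 1.
have M1p : 0 < M1 by rewrite /M1; have := mnorm_ge0 (pmat (j1 t)); lra.
have M2p : 0 < M2 by rewrite /M2; have := mnorm_ge0 (pmat (j2 t)); lra.
have e1 : 0 < Num.min 1 (e / 2 / M2) by rewrite lt_min ltr01 !divr_gt0.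
have e2 : 0 < e / 2 / M1 by rewrite !divr_gt0.
have [d1 d1p hd1] := hc1 _ e1; have [d2 d2p hd2] := hc2 _ e2.
exists (Num.min d1 d2); first by rewrite lt_min d1p.
move=> t' It'; rewrite lt_min => /andP[t'd1 t'd2].
move: (hd1 t' It' t'd1) (hd2 t' It' t'd2); rewrite lt_min => /andP[q1 q1'] q2.
rewrite ltr_pdivlMr // in q1'; rewrite ltr_pdivlMr // in q2.
apply: le_lt_trans (pdist_pmul _ _ _ _) _.
have := mnorm_le_pdist (j1 t') (j1 t); have := pdist_ge0 (j2 t') (j2 t).
have := pdist_ge0 (j1 t') (j1 t).
have : pdist (j1 t') (j1 t) * mnorm (pmat (j2 t)) <= pdist (j1 t') (j1 t) * M2.
  by rewrite ler_wpM2l ?pdist_ge0 // /M2 lerDl.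
have : mnorm (pmat (j1 t')) * pdist (j2 t') (j2 t) <= M1 * pdist (j2 t') (j2 t).
  by rewrite ler_wpM2r ?pdist_ge0 //; have := mnorm_le_pdist (j1 t') (j1 t); rewrite /M1; lra.
move=> *; lra.
Qed.

Lemma cont_within_pinv I j t : cont_within I j t -> cont_within I (fun t => pinv (j t)) t.
Proof.
move=> hc e e0; have [d d0 hd] := hc e e0.
by exists d => // t' It' ht'; rewrite pdist_pinv; apply: hd.
Qed.

Lemma Gam_path_restrict s psi I j I' : Gam_path Gam s psi I j -> Defs.is_interval I' -> I' s ->
  (forall t, I' t -> I t) -> Gam_path Gam s psi I' j.
Proof.
move=> [hI [hU [hs [hc [hm he]]]]] hI' hs' sub.
split=> //; split; first by move=> t /sub; apply: hU.
split=> //; split; last by split=> // t /sub; apply: hm.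
by move=> t It; apply: cont_within_sub sub (hc t (sub t It)).
Qed.

Lemma Gam_path_one s d : unit_int s -> 0 < d -> Gam_path Gam s pone (window s d) (fun _ => pone).
Proof.
move=> hs d0; split; first exact: window_interval.
split; first by move=> t [].
split; first exact: window_center.
split; first by move=> t _ e e0; exists 1 => // t' _ _; rewrite pdistxx.
by split=> // t [ht _]; apply: Gam_one.
Qed.

Lemma Gam_path_mul s h1 h2 I j1 j2 : Gam_path Gam s h1 I j1 -> Gam_path Gam s h2 I j2 ->
  Gam_path Gam s (pmul h1 h2) I (fun t => pmul (j1 t) (j2 t)).
Proof.
move=> [hI [hU [hs [hc1 [hm1 he1]]]]] [_ [_ [_ [hc2 [hm2 he2]]]]].
do 3 (split=> //); split; first by move=> t It; exact: (cont_within_pmul (hc1 t It) (hc2 t It)).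
by split; [move=> t It; apply: Gam_mul => //; auto | rewrite he1 he2].
Qed.

Lemma Gam_path_inv s h I j : Gam_path Gam s h I j ->
  Gam_path Gam s (pinv h) I (fun t => pinv (j t)).
Proof.
move=> [hI [hU [hs [hc [hm he]]]]].
do 3 (split=> //); split; first by move=> t It; exact: (cont_within_pinv (hc t It)).
by split; [move=> t It; apply: Gam_inv => //; auto | rewrite he].
Qed.

Lemma Gam_paths_agree_open s1 p1 I1 j1 s2 p2 I2 j2 :
  Gam_path Gam s1 p1 I1 j1 -> Gam_path Gam s2 p2 I2 j2 ->
  rel_open (fun t => I1 t /\ I2 t) (fun t => j1 t = j2 t).
Proof.
move=> [_ [hU1 [_ [hc1 [hm1 _]]]]] [_ [hU2 [_ [hc2 [hm2 _]]]]] u [Iu1 Iu2] ju.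
have [eps ep [del dp hd]] := uniformly_discrete hG (hU1 u Iu1).
set M := mnorm (pmat (j1 u)) + 1.
have Mp : 0 < M by have := mnorm_ge0 (pmat (j1 u)); rewrite /M; lra.
have e0 : 0 < Num.min 1 (eps / 4 / M) by rewrite lt_min ltr01 !divr_gt0.
have [d1 d1p hd1] := hc1 u Iu1 _ e0; have [d2 d2p hd2] := hc2 u Iu2 _ e0.
exists (Num.min del (Num.min d1 d2)); first by rewrite !lt_min dp d1p d2p.
move=> u' [Iu1' Iu2']; rewrite !lt_min => /andP[u'del /andP[u'd1 u'd2]].
move: (hd1 u' Iu1' u'd1) (hd2 u' Iu2' u'd2); rewrite !lt_min -ju.
move=> /andP[q1 q1'] /andP[_ q2]; rewrite ltr_pdivlMr // in q1'; rewrite ltr_pdivlMr // in q2.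
apply: (hd u' (hU1 u' Iu1') u'del); [exact: hm1 | exact: hm2 |].
have := pdist_triangle (j1 u') (j1 u) (j2 u'); rewrite [pdist (j1 u) (j2 u')]pdistC.
move/(ler_wpM2l (ltW Mp)).
have : mnorm (pmat (j1 u')) * pdist (j1 u') (j2 u') <= M * pdist (j1 u') (j2 u').
  by rewrite ler_wpM2r ?pdist_ge0 //; have := mnorm_le_pdist (j1 u') (j1 u); rewrite /M; lra.
move=> *; lra.
Qed.

Lemma paths_agree_closed I1 I2 j1 j2 : (forall t, I1 t -> cont_within I1 j1 t) ->
  (forall t, I2 t -> cont_within I2 j2 t) ->
  rel_closed (fun t => I1 t /\ I2 t) (fun t => j1 t = j2 t).
Proof.
move=> hc1 hc2 u [Iu1 Iu2] hcl; apply: pdist_eq0; apply/eqP.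
rewrite eq_le pdist_ge0 andbT; apply: le0_lt_all => z z0.
have z2 : 0 < z / 2 by lra.
have [d1 d1p hd1] := hc1 u Iu1 _ z2; have [d2 d2p hd2] := hc2 u Iu2 _ z2.
have d0 : 0 < Num.min d1 d2 by rewrite lt_min d1p.
have [u' [[Iu1' Iu2'] + eu']] := hcl _ d0.
rewrite lt_min => /andP[u'd1 u'd2].
have := hd1 u' Iu1' u'd1; have := hd2 u' Iu2' u'd2.
have := pdist_triangle (j1 u) (j2 u') (j2 u); rewrite [pdist (j1 u) (j2 u')]pdistC eu'.
move=> *; lra.
Qed.

Lemma Gam_path_unique s1 p1 I1 j1 s2 p2 I2 j2 p :
  Gam_path Gam s1 p1 I1 j1 -> Gam_path Gam s2 p2 I2 j2 ->
  I1 p -> I2 p -> j1 p = j2 p -> forall t, I1 t -> I2 t -> j1 t = j2 t.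
Proof.
move=> P1 P2 Ip1 Ip2 ejp t It1 It2.
have [hI1 [_ [_ [hc1 _]]]] := P1; have [hI2 [_ [_ [hc2 _]]]] := P2.
apply: (@clopen_interval R _ (fun t => j1 t = j2 t) p (interval_meet hI1 hI2)) => //.
- exact: Gam_paths_agree_open P1 P2.
- exact: paths_agree_closed hc1 hc2.
Qed.

Lemma Gam_approx s g : unit_int s -> Gam s g -> forall eta : R, 0 < eta ->
  exists2 d : R, 0 < d & forall t, unit_int t -> `|t - s| < d ->
    exists x, Gam t x /\ pdist x g < eta.
Proof.
move=> hs hg eta eta0; apply: NNPP => /not_near_seq[u [hu us]].
have [_ approx] := Gam_chabauty hG (fun n => (hu n).1) hs us.
have [psi [hpsi /(_ eta eta0)[N hN]]] := approx g hg.
by apply: (hu N).2; exists (psi N); split; [apply: hpsi | apply: hN].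
Qed.

Lemma Gam_near_unique s g : unit_int s ->
  exists2 eta : R, 0 < eta & exists2 del : R, 0 < del & forall t, unit_int t ->
    `|t - s| < del -> forall x y, Gam t x -> Gam t y ->
    pdist x g <= eta -> pdist y g <= eta -> x = y.
Proof.
move=> hs; have [eps ep [del dp hd]] := uniformly_discrete hG hs.
set M := mnorm (pmat g) + 1.
have Mp : 0 < M by have := mnorm_ge0 (pmat g); rewrite /M; lra.
exists (Num.min 1 (eps / 4 / M)); first by rewrite lt_min ltr01 !divr_gt0.
exists del => // t ht htd x y hx hy; rewrite !le_min => /andP[x1 hxg] /andP[y1 hyg].
rewrite ler_pdivlMr // in hxg; rewrite ler_pdivlMr // in hyg.
apply: (hd t ht htd x y hx hy).
have := pdist_triangle x g y; rewrite [pdist g y]pdistC; move/(ler_wpM2l (ltW Mp)).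
have : mnorm (pmat x) * pdist x y <= M * pdist x y.
  by rewrite ler_wpM2r ?pdist_ge0 //; have := mnorm_le_pdist x g; rewrite /M => *; lra.
move=> *; lra.
Qed.

(* j t is the element of Gam t near g, which is unique for t near s *)
Lemma Gam_path_exists s g : unit_int s -> Gam s g ->
  exists2 d : R, 0 < d & exists j, Gam_path Gam s g (window s d) j.
Proof.
move=> hs hg.
have [eta eta0 [del del0 uniq]] := Gam_near_unique g hs.
have [d1 d10 approx] := Gam_approx hs hg eta0.
set d := Num.min del d1.
have d0 : 0 < d by rewrite lt_min del0.
have Wdel t : window s d t -> `|t - s| < del by case=> _; rewrite lt_min => /andP[].
have Wd1 t : window s d t -> `|t - s| < d1 by case=> _; rewrite lt_min => /andP[].
pose j t := epsilon (inhabits g) (fun x => Gam t x /\ pdist x g < eta).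
have jP t : window s d t -> Gam t (j t) /\ pdist (j t) g < eta.
  move=> Wt; apply: (epsilon_spec (inhabits g) (fun x => Gam t x /\ pdist x g < eta)).
  by apply: approx; [case: Wt | apply: Wd1].
have Ws := window_center hs d0.
have js : j s = g.
  have [G1 G2] := jP s Ws.
  by apply: (uniq s hs (Wdel s Ws)) => //; rewrite ?pdistxx ltW.
exists d => //; exists j.
do 3 (split; first by [apply: window_interval | move=> t [] | ]).
split; last by split=> // t /jP[].
move=> t Wt; apply: cont_within_paccum => u hu ut.
have hbd n : mnorm (pmat (j (u n))) <= mnorm (pmat g) + eta.
  by have := mnorm_le_pdist (j (u n)) g; have := (jP _ (hu n)).2; move=> *; lra.
have [c Gc hc] := Gam_cluster hG (fun n => (hu n).1) Wt.1 ut (fun n => (jP _ (hu n)).1) hbd.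
have cg : pdist c g <= eta.
  rewrite -subr_le0; apply: le0_lt_all => z z0.
  have [m _ hm] := hc z z0 0%N; have := (jP _ (hu m)).2.
  by have := pdist_triangle c (j (u m)) g; rewrite [pdist c (j _)]pdistC; move=> *; lra.
have <- : c = j t by apply: (uniq t Wt.1 (Wdel t Wt)) => //; [apply: (jP t Wt).1 |
  apply: ltW; apply: (jP t Wt).2].
exact: hc.
Qed.

End GammaPaths.

Section ContinuationMaps.
Variable R : realType.
Notation PSL2 := (PSL2 R).
Notation pone := (pone R).
Variable Gam : R -> PSL2 -> Prop.
Hypothesis hG : cont_path_D Gam.

Lemma J_spec s t psi : match J Gam s t psi with
  | Some phi => J_rel Gam s t psi phi
  | None => ~ exists phi, J_rel Gam s t psi phi end.
Proof.
apply: (epsilon_spec (inhabits None) (fun o : option PSL2 => match o with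
  | Some phi => J_rel Gam s t psi phi
  | None => ~ exists phi, J_rel Gam s t psi phi end)).
by case: (classic (exists phi, J_rel Gam s t psi phi)) => [[phi h]|h];
  [exists (Some phi) | exists None].
Qed.

Lemma J_rel_uniq s t psi phi1 phi2 :
  J_rel Gam s t psi phi1 -> J_rel Gam s t psi phi2 -> phi1 = phi2.
Proof.
move=> [I1 [j1 [P1 [It1 <-]]]] [I2 [j2 [P2 [It2 <-]]]].
have [_ [_ [Is1 [_ [_ js1]]]]] := P1; have [_ [_ [Is2 [_ [_ js2]]]]] := P2.
by apply: (Gam_path_unique hG P1 P2 Is1 Is2) => //; rewrite js1 js2.
Qed.

Lemma J_SomeP s t psi phi : J Gam s t psi = Some phi <-> J_rel Gam s t psi phi.
Proof.
split=> [e|r]; first by have := J_spec s t psi; rewrite e.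
have := J_spec s t psi; case: (J Gam s t psi) => [phi' r'|]; last by case; exists phi.
by rewrite (J_rel_uniq r' r).
Qed.

Lemma J_pmul s t h1 h2 x1 x2 : J Gam s t h1 = Some x1 -> J Gam s t h2 = Some x2 ->
  J Gam s t (pmul h1 h2) = Some (pmul x1 x2).
Proof.
move=> /J_SomeP[I1 [j1 [P1 [It1 <-]]]] /J_SomeP[I2 [j2 [P2 [It2 <-]]]].
have [hI1 [_ [Is1 _]]] := P1; have [hI2 [_ [Is2 _]]] := P2.
have hI := interval_meet hI1 hI2.
have Q1 := Gam_path_restrict P1 hI (conj Is1 Is2) (fun _ h => proj1 h).
have Q2 := Gam_path_restrict P2 hI (conj Is1 Is2) (fun _ h => proj2 h).
by apply/J_SomeP; exists (fun t => I1 t /\ I2 t), (fun t => pmul (j1 t) (j2 t));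
  split; [apply: Gam_path_mul | split].
Qed.

Lemma J_inj s t h1 h2 x : J Gam s t h1 = Some x -> J Gam s t h2 = Some x -> h1 = h2.
Proof.
move=> /J_SomeP[I1 [j1 [P1 [It1 e1]]]] /J_SomeP[I2 [j2 [P2 [It2 e2]]]].
have [_ [_ [Is1 [_ [_ <-]]]]] := P1; have [_ [_ [Is2 [_ [_ <-]]]]] := P2.
by apply: (Gam_path_unique hG P1 P2 It1 It2) => //; rewrite e1 e2.
Qed.

Lemma J_of_path s t h d j : Gam_path Gam s h (window s d) j -> window s d t ->
  J Gam s t h = Some (j t).
Proof. by move=> P Wt; apply/J_SomeP; exists (window s d), j. Qed.

Lemma Gam_paths_subgroup s d : unit_int s -> 0 < d ->
  psubgroup (fun h => exists j, Gam_path Gam s h (window s d) j).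
Proof.
move=> hs d0; split; first by exists (fun=> pone); apply: Gam_path_one.
split; first by move=> g h [j1 P1] [j2 P2]; exists (fun t => pmul (j1 t) (j2 t)); apply: Gam_path_mul.
by move=> g [j P]; exists (fun t => pinv (j t)); apply: Gam_path_inv.
Qed.

Lemma Gam_paths_list s (l : list PSL2) : unit_int s -> (forall x, In x l -> Gam s x) ->
  exists2 d : R, 0 < d & forall x, In x l -> exists j, Gam_path Gam s x (window s d) j.
Proof.
move=> hs; elim: l => [|x l IH] hl; first by exists 1.
have [d1 d1p [j1 P1]] := Gam_path_exists hG hs (hl x (or_introl erefl)).
have [d2 d2p hd2] := IH (fun y hy => hl y (or_intror hy)).
have d0 : 0 < Num.min d1 d2 by rewrite lt_min d1p.
have sub (d' : R) t : Num.min d1 d2 <= d' -> window s (Num.min d1 d2) t -> window s d' t.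
  by move=> dd' [ut td]; split=> //; apply: lt_le_trans td dd'.
exists (Num.min d1 d2) => // y [<-|hy].
  exists j1; apply: (Gam_path_restrict P1 (window_interval (s:=s) (d:=Num.min d1 d2)) (window_center hs d0)).
  by move=> t; apply: sub; rewrite ge_min lexx.
have [j P] := hd2 y hy; exists j.
apply: (Gam_path_restrict P (window_interval (s:=s) (d:=Num.min d1 d2)) (window_center hs d0)).
by move=> t; apply: sub; rewrite ge_min lexx orbT.
Qed.

End ContinuationMaps.

Lemma fin_gen_subgroupP (R : realType) (H : PSL2 R -> Prop) : fin_gen_subgroup H ->
  exists l : list (PSL2 R), (forall x, In x l -> H x) /\
    forall K, psubgroup K -> (forall x, In x l -> K x) -> forall h, H h -> K h.
Proof.
move=> [_ [l hl]]; exists l; split; first by move=> x hx; apply/hl => K _; apply.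
by move=> K hK hlK h /hl; apply.
Qed.

Theorem mainTheorem12 (R : realType) (Gam : R -> PSL2 R -> Prop) :
  cont_path_D Gam ->
  forall (s : R) (H : PSL2 R -> Prop),
    unit_int s -> fin_gen_subgroup H -> (forall h, H h -> Gam s h) ->
    exists2 d : R, 0 < d &
      forall t : R, unit_int t -> `|t - s| < d ->
        (forall h, H h -> J Gam s t h <> None) /\
        (forall h1 h2 x1 x2, H h1 -> H h2 ->
           J Gam s t h1 = Some x1 -> J Gam s t h2 = Some x2 ->
           J Gam s t (pmul h1 h2) = Some (pmul x1 x2)) /\
        (forall h1 h2, H h1 -> H h2 -> J Gam s t h1 = J Gam s t h2 -> h1 = h2).
Proof.
move=> hG s H hs Hfg HG.
have [l [lH Hind]] := fin_gen_subgroupP Hfg.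
have [d d0 hd] := Gam_paths_list hG hs (fun x hx => HG x (lH x hx)).
have Hpath := Hind _ (Gam_paths_subgroup hG hs d0) hd.
exists d => // t ht htd.
have Jdef h : H h -> exists x, J Gam s t h = Some x.
  by move=> /Hpath[j P]; exists (j t); apply: J_of_path P _.
split; first by move=> h /Jdef[x ->].
split; first by move=> *; apply: J_pmul.
move=> h1 h2 /Jdef[x e1] _ e; rewrite e1 in e.
exact: J_inj e1 (esym e).
Qed.
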